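(* Let $S$ be an LAD-AG-groupoid. Then $S$ is an AG$^{**}$-groupoid, i.e. $a(bc)=b(ac)$ for all $a,b,c\in S$.
   Context: A groupoid is a set $S$ with a binary operation written as juxtaposition; $ab\cdot c$ means $(ab)c$ and $a\cdot bc$ means $a(bc)$. An AG-groupoid is a groupoid satisfying the left invertive law $(ab)c=(cb)a$ for all $a,b,c\in S$. An LAD-AG-groupoid (left abelian distributive AG-groupoid) is an AG-groupoid satisfying $a(bc)=(ab)(ca)$ for all $a,b,c\in S$. *)

Definition AG_groupoid {S : Type} (op : S -> S -> S) : Prop :=
  forall a b c : S, op (op a b) c = op (op c b) a.

Definition LAD_AG_groupoid {S : Type} (op : S -> S -> S) : Prop :=
  AG_groupoid op /\ forall a b c : S, op a (op b c) = op (op a b) (op c a).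

Definition AGss_groupoid {S : Type} (op : S -> S -> S) : Prop :=
  AG_groupoid op /\ forall a b c : S, op a (op b c) = op b (op a c).


(* By the medial law, a(bc) = (ab)(ca) is symmetric in b and c, so left
   multiplication only sees unordered products.  Expanding a(bc) and b(ac)
   once more with the left distributive law reduces the theorem to
   z(a(ab)) = z(b(ba)), and both sides equal z((ab)(ba)). *)

Section AGGroupoid.

Variables (S : Type) (op : S -> S -> S).
Hypothesis left_invertive : AG_groupoid op.

Lemma AG_medial (x y z w : S) :
  op (op x y) (op z w) = op (op x z) (op y w).
Proof.
  rewrite (left_invertive x y (op z w)), (left_invertive z w y).
  now rewrite (left_invertive x z (op y w)).
Qed.

End AGGroupoid.

Arguments AG_medial {S op}.

Section LADAGGroupoid.

Variables (S : Type) (op : S -> S -> S).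
Hypothesis left_invertive : AG_groupoid op.
Hypothesis left_distributive :
  forall a b c : S, op a (op b c) = op (op a b) (op c a).

Lemma LAD_mulC_right (x y z : S) : op x (op y z) = op x (op z y).
Proof.
  rewrite (left_distributive x y z), (AG_medial left_invertive).
  now rewrite <- left_distributive.
Qed.

Lemma LAD_mul_square_swap (z a b : S) :
  op z (op a (op a b)) = op z (op (op b a) (op a b)).
Proof.
  rewrite (LAD_mulC_right a a b), (LAD_mulC_right z a (op b a)).
  rewrite (left_invertive b a a), (LAD_mulC_right z (op a a) b).
  now rewrite (left_distributive b a a).
Qed.

Lemma LAD_mul_square_sym (z a b : S) :
  op z (op a (op a b)) = op z (op b (op b a)).
Proof.
  rewrite !LAD_mul_square_swap.
  apply LAD_mulC_right.
Qed.

End LADAGGroupoid.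

Arguments LAD_mulC_right {S op}.
Arguments LAD_mul_square_sym {S op}.

Theorem mainTheorem3 (S : Type) (op : S -> S -> S) :
  LAD_AG_groupoid op -> AGss_groupoid op.
Proof.
  intros [left_invertive left_distributive].
  split; [exact left_invertive |].
  intros a b c.
  rewrite (left_distributive a b c), (left_distributive (op a b) c a).
  rewrite (LAD_mul_square_sym left_invertive left_distributive).
  rewrite (left_invertive (op a b) c), (LAD_mulC_right left_invertive left_distributive _ a b).
  rewrite (left_invertive (op b (op b a)) c).
  now rewrite <- !left_distributive.
Qed.
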